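(* Let $q$ be a complex number with $|q|<1$. Then \[ \sum_{n\geq 0} q^{2n} (q^{4n+4};q^4)_\infty (q;q)_{2n} = \frac{2(q^4;q^4)_\infty}{1+q}- \frac{(q;q)_\infty}{1+q}, \] and \[ (1+q) \sum_{n\geq 0} \frac{(-q^2;q^2)_n\, q^{2n+1}}{(q;q^2)_{n+1}} = \frac{(q^4;q^4)_\infty}{(q;q)_\infty}-1 . \]
   Context: For a complex number $a$ and $|q|<1$: $(a;q)_0=1$, $(a;q)_n=\prod_{j=0}^{n-1}(1-aq^j)$ for integers $n\ge 1$, and $(a;q)_\infty=\prod_{j=0}^{\infty}(1-aq^j)$. *)

From Stdlib Require Import Reals.
From Coquelicot Require Import Coquelicot.
Open Scope C_scope.

Fixpoint qpoch (a q : C) (n : nat) : C :=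
  match n with O => 1 | S m => qpoch a q m * (1 - a * q ^ m) end.

(* infinite q-Pochhammer (a;q)_oo : the limit of the partial products
   (the limit exists for |q| < 1; C is a complete space) *)
Definition qpoch_inf (a q : C) : C :=
  @lim (C_CompleteNormedModule : CompleteSpace) (filtermap (qpoch a q) eventually).

From Stdlib Require Import Reals Lra Lia.
From Coquelicot Require Import Coquelicot.
Open Scope C_scope.

(* Both series telescope.  With T_n = (q^(4n+4);q^4)_oo = (1 - q^(4n+4)) T_(n+1)
   and c_n = (1 + q^(2n)) (q;q)_(2n) T_n, (1 + q) times the n-th term of the first
   series is c_n - c_(n+1); moreover c_0 = 2 (q^4;q^4)_oo and c_n -> (q;q)_oo.
   In the second series, (1 + q) times the n-th term is rho_(n+1) - rho_n with
   rho_n = (-q^2;q^2)_n / (q;q^2)_n, and (-q^2;q^2)_n (q;q)_(2n) = (q^4;q^4)_n (q;q^2)_n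
   gives rho_n = (q^4;q^4)_n / (q;q)_(2n) -> (q^4;q^4)_oo / (q;q)_oo.
   Analytically, (a;r)_n converges because its increments are dominated by a
   geometric series, and its limit is nonzero for |a| < 1 because past some index
   the remaining factors 1 - a r^j have sum |a r^j| <= 1/2. *)

Section ComplexLimits.
Context {T : Type} {F : (T -> Prop) -> Prop} {FF : Filter F}.

Lemma filterlim_Cplus (u v : T -> C) (a b : C) :
  filterlim u F (locally a) -> filterlim v F (locally b) ->
  filterlim (fun x => u x + v x) F (locally (a + b)).
Proof.
  intros Hu Hv.
  exact (filterlim_comp_2 u v Cplus Hu Hv (filterlim_plus (K := C_AbsRing) a b)).
Qed.

Lemma filterlim_locally_C (u : T -> C) (a : C) :
  filterlim u F (locally a) <->
  filterlim u F (@locally (AbsRing_UniformSpace C_AbsRing) a).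
Proof. split; intros Hu P HP; apply Hu; apply locally_C; exact HP. Qed.

Lemma filterlim_Cmult (u v : T -> C) (a b : C) :
  filterlim u F (locally a) -> filterlim v F (locally b) ->
  filterlim (fun x => u x * v x) F (locally (a * b)).
Proof.
  rewrite !filterlim_locally_C. intros Hu Hv.
  exact (filterlim_comp_2 u v Cmult Hu Hv (filterlim_mult (K := C_AbsRing) a b)).
Qed.

Lemma filterlim_Cinv (u : T -> C) (a : C) :
  a <> 0 -> filterlim u F (locally a) -> filterlim (fun x => / u x) F (locally (/ a)).
Proof.
  intros Ha Hu.
  pose proof (proj1 (Cmod_gt_0 a) Ha) as Ha_pos.
  apply (filterlim_locally_ball_norm (K := C_AbsRing) (U := C_NormedModule)).
  intros eps.
  set (d := Rmin (Cmod a / 2) (eps * (Cmod a * Cmod a) / 2)).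
  assert (Hd : (0 < d)%R).
  { apply Rmin_pos; [lra|].
    pose proof (cond_pos eps). pose proof (Rmult_lt_0_compat _ _ Ha_pos Ha_pos). nra. }
  pose proof (Rmin_l (Cmod a / 2) (eps * (Cmod a * Cmod a) / 2)) as Hd_l. fold d in Hd_l.
  pose proof (Rmin_r (Cmod a / 2) (eps * (Cmod a * Cmod a) / 2)) as Hd_r. fold d in Hd_r.
  apply (filter_imp (fun x => Cmod (u x - a) < d)%R).
  2: exact (proj1 (filterlim_locally_ball_norm (K := C_AbsRing) (U := C_NormedModule) u a) Hu
              (mkposreal d Hd)).
  intros x Hx. change (Cmod (/ u x - / a) < eps)%R.
  assert (Hdist : Cmod (a - u x) = Cmod (u x - a)).
  { rewrite <- Cmod_opp. f_equal. ring. }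
  assert (Hux : (Cmod a / 2 <= Cmod (u x))%R).
  { pose proof (Cmod_triangle (u x) (a - u x)) as Htri.
    replace (u x + (a - u x)) with a in Htri by ring. lra. }
  assert (Hux0 : u x <> 0).
  { intros E. rewrite E, Cmod_0 in Hux. lra. }
  replace (/ u x - / a) with ((a - u x) / (u x * a)) by (field; auto).
  rewrite Cmod_div, Cmod_mult, Hdist by (apply Cmult_neq_0; auto).
  apply Rlt_div_l. { apply Rmult_lt_0_compat; lra. }
  pose proof (cond_pos eps).
  assert (eps * (Cmod a * Cmod a) / 2 <= eps * (Cmod (u x) * Cmod a))%R by nra.
  lra.
Qed.

Lemma filterlim_Cdiv (u v : T -> C) (a b : C) :
  b <> 0 -> filterlim u F (locally a) -> filterlim v F (locally b) ->
  filterlim (fun x => u x / v x) F (locally (a / b)).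
Proof. intros Hb Hu Hv. apply filterlim_Cmult; [exact Hu | exact (filterlim_Cinv v b Hb Hv)]. Qed.

End ComplexLimits.

Lemma lim_filtermap_eventually (u : nat -> C) (l : C) :
  filterlim u eventually (locally l) ->
  @lim (C_CompleteNormedModule : CompleteSpace) (filtermap u eventually) = l.
Proof.
  intros Hu.
  assert (Hproper : ProperFilter (filtermap u eventually))
    by apply filtermap_proper_filter, eventually_filter.
  assert (Hcauchy : cauchy (filtermap u eventually)).
  { intros eps. exists l. apply Hu. apply locally_ball. }
  apply (filterlim_locally_unique (F := eventually) u); [|exact Hu].
  apply filterlim_locally. intros eps.
  exact (complete_cauchy (T := C_CompleteNormedModule) _ Hproper Hcauchy eps).
Qed.

Lemma filterlim_shift_S {U : UniformSpace} (u : nat -> U) (l : U) :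
  filterlim u eventually (locally l) <-> filterlim (fun n => u (S n)) eventually (locally l).
Proof.
  split; intros Hu.
  - apply (filterlim_comp _ _ _ S u _ eventually); [|exact Hu].
    apply eventually_subseq. intros n. lia.
  - intros P HP. destruct (Hu P HP) as [N HN].
    exists (S N). intros [|n] Hn; [lia|]. apply HN. lia.
Qed.

Lemma sum_n_increments (p : nat -> C) (N : nat) :
  sum_n (fun k => p (S k) - p k) N = p (S N) - p O.
Proof.
  induction N as [|N IH].
  - apply sum_O.
  - rewrite sum_Sn, IH. change (p (S N) - p O + (p (S (S N)) - p (S N)) = p (S (S N)) - p O).
    ring.
Qed.

Lemma is_series_increments (p : nat -> C) (l : C) :
  filterlim p eventually (locally l) -> is_series (fun k => p (S k) - p k) (l - p O).
Proof.
  intros Hp. unfold is_series.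
  apply (filterlim_ext (fun N => p (S N) - p O)).
  { intros N. symmetry. apply sum_n_increments. }
  apply filterlim_Cplus; [|apply filterlim_const].
  exact (proj1 (filterlim_shift_S p l) Hp).
Qed.

Lemma filterlim_of_is_series_increments (p : nat -> C) (l : C) :
  is_series (fun k => p (S k) - p k) l -> filterlim p eventually (locally (l + p O)).
Proof.
  intros Hl. apply (proj2 (filterlim_shift_S p _)).
  apply (filterlim_ext (fun N => sum_n (fun k => p (S k) - p k) N + p O)).
  { intros N. rewrite sum_n_increments. ring. }
  apply filterlim_Cplus; [exact Hl | apply filterlim_const].
Qed.

Lemma pow_unit_interval x n : (0 <= x <= 1)%R -> (0 <= x ^ n <= 1)%R.
Proof.
  intros Hx. split; [apply pow_le; lra|].
  rewrite <- (pow1 n). apply pow_incr. lra.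
Qed.

Definition geom_sum (s : R) (n : nat) : R := ((1 - s ^ n) / (1 - s))%R.

Lemma geom_sum_0 s : geom_sum s 0 = 0%R.
Proof. unfold geom_sum. simpl. unfold Rdiv. ring. Qed.

Lemma geom_sum_S s n : s <> 1%R -> geom_sum s (S n) = (geom_sum s n + s ^ n)%R.
Proof. intros Hs. unfold geom_sum. simpl. field. lra. Qed.

Lemma geom_sum_bounds s n : (0 <= s < 1)%R -> (0 <= geom_sum s n <= / (1 - s))%R.
Proof.
  intros Hs. unfold geom_sum.
  pose proof (pow_unit_interval s n ltac:(lra)).
  split.
  - apply Rdiv_le_0_compat; lra.
  - unfold Rdiv. rewrite <- (Rmult_1_l (/ (1 - s))) at 2.
    apply Rmult_le_compat_r; [apply Rlt_le, Rinv_0_lt_compat|]; lra.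
Qed.

Lemma exp_le_compat x y : (x <= y)%R -> (exp x <= exp y)%R.
Proof. intros [Hlt | ->]; [apply Rlt_le, exp_increasing, Hlt | apply Rle_refl]. Qed.

Lemma one_minus_neq0 (x : C) : (Cmod x < 1)%R -> 1 - x <> 0.
Proof.
  intros Hx E. replace x with (RtoC 1) in Hx.
  - rewrite Cmod_1 in Hx. lra.
  - replace x with (1 - (1 - x)) by ring. rewrite E. ring.
Qed.

Lemma Cmod_pow_S_lt1 (z : C) k : (Cmod z < 1)%R -> (Cmod (z ^ S k) < 1)%R.
Proof.
  intros Hz. rewrite Cmod_pow. simpl.
  pose proof (Cmod_ge_0 z).
  pose proof (pow_unit_interval (Cmod z) k ltac:(lra)). nra.
Qed.

Lemma qpoch_add a r m k : qpoch a r (m + k) = qpoch a r m * qpoch (a * r ^ m) r k.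
Proof.
  induction k as [|k IH].
  - rewrite Nat.add_0_r. simpl. ring.
  - rewrite Nat.add_succ_r. simpl. rewrite IH, Cpow_add_r. ring.
Qed.

Lemma qpoch_double a r n : qpoch a r (2 * n) = qpoch a (r ^ 2) n * qpoch (a * r) (r ^ 2) n.
Proof.
  induction n as [|n IH]; [simpl; ring|].
  replace (2 * S n)%nat with (S (S (2 * n))) by lia.
  cbn [qpoch]. rewrite IH, <- Cpow_mult_r. cbn [Cpow]. ring.
Qed.

Lemma qpoch_mul_opp a r n : qpoch a r n * qpoch (- a) r n = qpoch (a ^ 2) (r ^ 2) n.
Proof.
  induction n as [|n IH]; [simpl; ring|].
  cbn [qpoch]. rewrite <- Cpow_mult_r, Nat.mul_comm, Cpow_mult_r.
  replace (qpoch a r n * (1 - a * r ^ n) * (qpoch (- a) r n * (1 - - a * r ^ n)))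
    with (qpoch a r n * qpoch (- a) r n * (1 - (a * r ^ n) ^ 2)) by (simpl; ring).
  rewrite IH, Cpow_mult_l. reflexivity.
Qed.

Lemma qpoch_neq0 a r n : (Cmod a < 1)%R -> (Cmod r <= 1)%R -> qpoch a r n <> 0.
Proof.
  intros Ha Hr. induction n as [|n IH]; simpl.
  - apply C1_nz.
  - apply Cmult_neq_0; [exact IH|]. apply one_minus_neq0.
    rewrite Cmod_mult, Cmod_pow.
    pose proof (Cmod_ge_0 a). pose proof (Cmod_ge_0 r).
    pose proof (pow_unit_interval (Cmod r) n ltac:(lra)). nra.
Qed.

Lemma filterlim_Cpow_0 (z : C) :
  (Cmod z < 1)%R -> filterlim (fun n => z ^ n) eventually (locally (0 : C)).
Proof.
  intros Hz. apply (filterlim_locally_ball_norm (K := C_AbsRing) (U := C_NormedModule)).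
  intros eps.
  destruct (pow_lt_1_zero (Cmod z)) with eps as [N HN];
    [rewrite Rabs_pos_eq; [exact Hz | apply Cmod_ge_0] | apply cond_pos |].
  exists N. intros n Hn. change (Cmod (z ^ n - 0) < eps)%R.
  replace (z ^ n - 0) with (z ^ n) by ring.
  specialize (HN n Hn). rewrite Rabs_pos_eq in HN by (apply pow_le, Cmod_ge_0).
  rewrite Cmod_pow. exact HN.
Qed.

Section InfiniteProduct.
Variable r : C.
Hypothesis hr : (Cmod r < 1)%R.

Let Cmod_r_bounds : (0 <= Cmod r < 1)%R.
Proof. split; [apply Cmod_ge_0 | exact hr]. Qed.

Lemma Cmod_qpoch_le a n : (Cmod (qpoch a r n) <= exp (Cmod a / (1 - Cmod r)))%R.
Proof.
  apply Rle_trans with (exp (Cmod a * geom_sum (Cmod r) n)).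
  - induction n as [|n IH]; simpl qpoch.
    + rewrite geom_sum_0, Rmult_0_r, exp_0, Cmod_1. lra.
    + rewrite Cmod_mult, geom_sum_S, Rmult_plus_distr_l, exp_plus by lra.
      apply Rmult_le_compat; try apply Cmod_ge_0; [exact IH|].
      eapply Rle_trans; [|apply exp_ineq1_le].
      eapply Rle_trans; [apply Cmod_triangle|].
      rewrite Cmod_1, Cmod_opp, Cmod_mult, Cmod_pow. lra.
  - apply exp_le_compat. unfold Rdiv. apply Rmult_le_compat_l; [apply Cmod_ge_0|].
    apply geom_sum_bounds, Cmod_r_bounds.
Qed.

Lemma Cmod_qpoch_ge a n :
  (Cmod a <= 1)%R -> (1 - Cmod a * geom_sum (Cmod r) n <= Cmod (qpoch a r n))%R.
Proof.
  intros Ha. induction n as [|n IH]; simpl qpoch.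
  - rewrite geom_sum_0, Cmod_1. lra.
  - rewrite Cmod_mult, geom_sum_S by lra.
    set (y := (Cmod a * Cmod r ^ n)%R).
    assert (Hy : (0 <= y <= 1)%R).
    { pose proof (pow_unit_interval (Cmod r) n ltac:(lra)).
      pose proof (Cmod_ge_0 a). unfold y. split; nra. }
    assert (Hfactor : (1 - y <= Cmod (1 - a * r ^ n))%R).
    { pose proof (Cmod_triangle (1 - a * r ^ n) (a * r ^ n)) as Htri.
      replace (1 - a * r ^ n + a * r ^ n) with (RtoC 1) in Htri by ring.
      rewrite Cmod_1, Cmod_mult, Cmod_pow in Htri. unfold y. lra. }
    rewrite Rmult_plus_distr_l. fold y.
    set (x := (Cmod a * geom_sum (Cmod r) n)%R) in *.
    assert (Hx : (0 <= x)%R).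
    { apply Rmult_le_pos; [apply Cmod_ge_0 | apply geom_sum_bounds, Cmod_r_bounds]. }
    apply Rle_trans with (Cmod (qpoch a r n) * (1 - y))%R.
    + apply Rle_trans with ((1 - x) * (1 - y))%R; [nra|].
      apply Rmult_le_compat_r; lra.
    + apply Rmult_le_compat_l; [apply Cmod_ge_0 | exact Hfactor].
Qed.

Lemma qpoch_cvg a : filterlim (qpoch a r) eventually (locally (qpoch_inf a r)).
Proof.
  set (K := exp (Cmod a / (1 - Cmod r))).
  assert (Hinc : ex_series (V := C_CompleteNormedModule)
                   (fun k => qpoch a r (S k) - qpoch a r k)).
  { apply (ex_series_le _ (fun k => scal (K * Cmod a)%R (Cmod r ^ k)%R)).
    - intros k. change (Cmod (qpoch a r k * (1 - a * r ^ k) - qpoch a r k)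
                          <= K * Cmod a * Cmod r ^ k)%R.
      replace (qpoch a r k * (1 - a * r ^ k) - qpoch a r k)
        with (- (qpoch a r k * (a * r ^ k))) by ring.
      rewrite Cmod_opp, !Cmod_mult, Cmod_pow, Rmult_assoc.
      apply Rmult_le_compat_r; [|apply Cmod_qpoch_le].
      apply Rmult_le_pos; [apply Cmod_ge_0 | apply pow_le, Cmod_ge_0].
    - apply (ex_series_scal (K := R_AbsRing) (V := R_NormedModule)).
      exists (/ (1 - Cmod r))%R. apply is_series_geom.
      rewrite Rabs_pos_eq; apply Cmod_r_bounds. }
  destruct Hinc as [l Hl].
  pose proof (filterlim_of_is_series_increments _ _ Hl) as Hcvg.
  unfold qpoch_inf. rewrite (lim_filtermap_eventually _ _ Hcvg). exact Hcvg.
Qed.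

Lemma qpoch_inf_split a m : qpoch_inf a r = qpoch a r m * qpoch_inf (a * r ^ m) r.
Proof.
  apply (filterlim_locally_unique (F := eventually) (fun k => qpoch a r (m + k))).
  - apply (filterlim_comp _ _ _ (fun k => m + k)%nat (qpoch a r) _ eventually).
    + apply eventually_subseq. intros k. lia.
    + apply qpoch_cvg.
  - apply (filterlim_ext (fun k => qpoch a r m * qpoch (a * r ^ m) r k)).
    { intros k. symmetry. apply qpoch_add. }
    apply filterlim_Cmult; [apply filterlim_const | apply qpoch_cvg].
Qed.

Lemma qpoch_inf_neq0 a : (Cmod a < 1)%R -> qpoch_inf a r <> 0.
Proof.
  intros Ha.
  destruct (pow_lt_1_zero (Cmod r)) with ((1 - Cmod r) / 2)%R as [J HJ].
  { rewrite Rabs_pos_eq; apply Cmod_r_bounds. }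
  { pose proof Cmod_r_bounds. lra. }
  specialize (HJ J (le_n J)).
  rewrite Rabs_pos_eq in HJ by (apply pow_le, Cmod_ge_0).
  rewrite (qpoch_inf_split a J). apply Cmult_neq_0; [apply qpoch_neq0; lra|].
  set (b := a * r ^ J).
  assert (Hb : (Cmod b <= (1 - Cmod r) / 2)%R).
  { unfold b. rewrite Cmod_mult, Cmod_pow.
    pose proof (Cmod_ge_0 a). pose proof (pow_le (Cmod r) J (Cmod_ge_0 r)). nra. }
  (* from index J on, sum |b r^j| <= 1/2, so the partial products stay at modulus >= 1/2 *)
  assert (Htail : forall n, (/ 2 <= Cmod (qpoch b r n))%R).
  { intros n. eapply Rle_trans; [|apply Cmod_qpoch_ge; pose proof Cmod_r_bounds; lra].
    destruct (geom_sum_bounds (Cmod r) n Cmod_r_bounds) as [G0 G1].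
    assert (Hinv : ((1 - Cmod r) * / (1 - Cmod r) = 1)%R)
      by (apply Rinv_r; pose proof Cmod_r_bounds; lra).
    pose proof (Cmod_ge_0 b). pose proof Cmod_r_bounds. nra. }
  intros H0.
  pose proof (qpoch_cvg b) as Hcvg. rewrite H0 in Hcvg.
  destruct (proj1 (filterlim_locally_ball_norm (K := C_AbsRing) (U := C_NormedModule) _ _) Hcvg
              (mkposreal (/ 2) ltac:(lra))) as [N HN].
  specialize (HN N (le_n N)). specialize (Htail N).
  change (Cmod (qpoch b r N - 0) < / 2)%R in HN.
  replace (qpoch b r N - 0) with (qpoch b r N) in HN by ring. lra.
Qed.

End InfiniteProduct.

Section Identities.
Variable q : C.
Hypothesis hq : (Cmod q < 1)%R.

Let hq2 : (Cmod (q ^ 2) < 1)%R. Proof. exact (Cmod_pow_S_lt1 q 1 hq). Qed.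
Let hq4 : (Cmod (q ^ 4) < 1)%R. Proof. exact (Cmod_pow_S_lt1 q 3 hq). Qed.

Let one_plus_q_neq0 : 1 + q <> 0.
Proof.
  replace (1 + q) with (1 - - q) by ring. apply one_minus_neq0. rewrite Cmod_opp. exact hq.
Qed.

Lemma filterlim_qpoch_even :
  filterlim (fun n => qpoch q q (2 * n)) eventually (locally (qpoch_inf q q)).
Proof.
  apply (filterlim_comp _ _ _ (fun n => 2 * n)%nat (qpoch q q) _ eventually).
  - apply eventually_subseq. intros n. lia.
  - exact (qpoch_cvg q hq q).
Qed.

Let tail n := qpoch_inf (q ^ (4 * n + 4)) (q ^ 4).

Lemma qpoch_inf_q4_split n : qpoch_inf (q ^ 4) (q ^ 4) = qpoch (q ^ 4) (q ^ 4) n * tail n.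
Proof.
  unfold tail. rewrite (qpoch_inf_split _ hq4 _ n), <- Cpow_mult_r, <- Cpow_add_r.
  rewrite (Nat.add_comm 4). reflexivity.
Qed.

Lemma tail_S n : tail n = (1 - q ^ (4 * n + 4)) * tail (S n).
Proof.
  unfold tail. rewrite (qpoch_inf_split _ hq4 _ 1), <- Cpow_mult_r, <- Cpow_add_r.
  replace (4 * n + 4 + 4 * 1)%nat with (4 * S n + 4)%nat by lia.
  cbn [qpoch Cpow]. ring.
Qed.

Lemma tail_cvg : filterlim tail eventually (locally (1 : C)).
Proof.
  set (A := qpoch_inf (q ^ 4) (q ^ 4)).
  assert (HA : A <> 0) by exact (qpoch_inf_neq0 _ hq4 _ hq4).
  apply (filterlim_ext (fun n => A / qpoch (q ^ 4) (q ^ 4) n)).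
  { intros n. unfold A. rewrite (qpoch_inf_q4_split n). field.
    apply qpoch_neq0; [exact hq4 | apply Rlt_le, hq4]. }
  replace (RtoC 1) with (A / A) by (field; exact HA).
  apply filterlim_Cdiv; [exact HA | apply filterlim_const | exact (qpoch_cvg _ hq4 _)].
Qed.

Let c n := (1 + q ^ (2 * n)) * qpoch q q (2 * n) * tail n.

Lemma first_term_telescopes n :
  q ^ (2 * n) * tail n * qpoch q q (2 * n) = - / (1 + q) * (c (S n) - c n).
Proof.
  unfold c. rewrite (tail_S n).
  replace (2 * S n)%nat with (S (S (2 * n))) by lia.
  replace (4 * n + 4)%nat with (2 * n + 2 * n + 4)%nat by lia.
  rewrite !Cpow_add_r. cbn [qpoch Cpow].
  field. exact one_plus_q_neq0.
Qed.

Lemma c_cvg : filterlim c eventually (locally (qpoch_inf q q)).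
Proof.
  replace (qpoch_inf q q) with ((1 + 0) * qpoch_inf q q * 1) by ring.
  apply filterlim_Cmult; [apply filterlim_Cmult | exact tail_cvg].
  - apply filterlim_Cplus; [apply filterlim_const|].
    apply (filterlim_ext (fun n => (q ^ 2) ^ n)); [intros n; symmetry; apply Cpow_mult_r|].
    exact (filterlim_Cpow_0 _ hq2).
  - exact filterlim_qpoch_even.
Qed.

Lemma first_identity :
  is_series
    (fun n => q ^ (2 * n) * qpoch_inf (q ^ (4 * n + 4)) (q ^ 4) * qpoch q q (2 * n))
    (2 * qpoch_inf (q ^ 4) (q ^ 4) / (1 + q) - qpoch_inf q q / (1 + q)).
Proof.
  apply (is_series_ext (fun n => - / (1 + q) * (c (S n) - c n))).
  { intros n. symmetry. apply first_term_telescopes. }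
  replace (2 * qpoch_inf (q ^ 4) (q ^ 4) / (1 + q) - qpoch_inf q q / (1 + q))
    with (- / (1 + q) * (qpoch_inf q q - c O)).
  - exact (is_series_scal_l _ _ _ (is_series_increments c _ c_cvg)).
  - unfold c, tail. cbn [qpoch Cpow Nat.mul Nat.add]. field. exact one_plus_q_neq0.
Qed.

Lemma qpoch_product_identity n :
  qpoch (- q ^ 2) (q ^ 2) n * qpoch q q (2 * n) = qpoch (q ^ 4) (q ^ 4) n * qpoch q (q ^ 2) n.
Proof.
  rewrite qpoch_double.
  replace (q * q) with (q ^ 2) by ring.
  replace (q ^ 4) with ((q ^ 2) ^ 2) by ring.
  rewrite <- (qpoch_mul_opp (q ^ 2) (q ^ 2)). ring.
Qed.

Let rho n := qpoch (- q ^ 2) (q ^ 2) n / qpoch q (q ^ 2) n.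

Lemma second_term_telescopes n :
  qpoch (- q ^ 2) (q ^ 2) n * q ^ (2 * n + 1) / qpoch q (q ^ 2) (n + 1)
  = / (1 + q) * (rho (S n) - rho n).
Proof.
  pose proof (qpoch_neq0 q (q ^ 2) (S n) hq (Rlt_le _ _ hq2)) as HS.
  pose proof (qpoch_neq0 q (q ^ 2) n hq (Rlt_le _ _ hq2)) as Hn.
  assert (Hfactor : 1 - q * (q ^ 2) ^ n <> 0).
  { intros E. apply HS. cbn [qpoch]. rewrite E. ring. }
  unfold rho. rewrite !Nat.add_1_r. cbn [qpoch].
  rewrite <- Cpow_mult_r in *. change (q ^ S (2 * n)) with (q * q ^ (2 * n)).
  set (x := q ^ (2 * n)) in *.
  field. auto.
Qed.

Lemma rho_cvg :
  filterlim rho eventually (locally (qpoch_inf (q ^ 4) (q ^ 4) / qpoch_inf q q)).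
Proof.
  apply (filterlim_ext (fun n => qpoch (q ^ 4) (q ^ 4) n / qpoch q q (2 * n))).
  { intros n. unfold rho.
    pose proof (qpoch_neq0 q (q ^ 2) n hq (Rlt_le _ _ hq2)).
    pose proof (qpoch_neq0 q q (2 * n) hq (Rlt_le _ _ hq)).
    transitivity (qpoch (q ^ 4) (q ^ 4) n * qpoch q (q ^ 2) n
                  / (qpoch q (q ^ 2) n * qpoch q q (2 * n))); [field; auto|].
    rewrite <- qpoch_product_identity. field. auto. }
  apply filterlim_Cdiv.
  - exact (qpoch_inf_neq0 q hq q hq).
  - exact (qpoch_cvg _ hq4 _).
  - exact filterlim_qpoch_even.
Qed.

Lemma second_identity :
  exists S : C,
    is_series
      (fun n => qpoch (- q ^ 2) (q ^ 2) n * q ^ (2 * n + 1) / qpoch q (q ^ 2) (n + 1)) S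
    /\ (1 + q) * S = qpoch_inf (q ^ 4) (q ^ 4) / qpoch_inf q q - 1.
Proof.
  exists (/ (1 + q) * (qpoch_inf (q ^ 4) (q ^ 4) / qpoch_inf q q - rho O)).
  split.
  - apply (is_series_ext (fun n => / (1 + q) * (rho (S n) - rho n))).
    { intros n. symmetry. apply second_term_telescopes. }
    exact (is_series_scal_l _ _ _ (is_series_increments rho _ rho_cvg)).
  - unfold rho. cbn [qpoch]. field.
    split; [exact (qpoch_inf_neq0 q hq q hq) | exact one_plus_q_neq0].
Qed.

End Identities.

Theorem theorem1 (q : C) (hq : (Cmod q < 1)%R) :
  is_series
    (fun n : nat =>
       q ^ (2 * n) * qpoch_inf (q ^ (4 * n + 4)) (q ^ 4) * qpoch q q (2 * n))
    (2 * qpoch_inf (q ^ 4) (q ^ 4) / (1 + q) - qpoch_inf q q / (1 + q))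
  /\
  exists S : C,
    is_series
      (fun n : nat =>
         qpoch (- q ^ 2) (q ^ 2) n * q ^ (2 * n + 1) / qpoch q (q ^ 2) (n + 1))
      S
    /\ (1 + q) * S = qpoch_inf (q ^ 4) (q ^ 4) / qpoch_inf q q - 1.
Proof.
  split.
  - exact (first_identity q hq).
  - exact (second_identity q hq).
Qed.
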